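(* Let $G=B_{n_0,\dots,n_g}$ be a banana graph of genus $g\ge2$, consider the twice-marked graph $(G,u,v)=(G,v_{0,0},v_{0,n_0})$ with torsion order $k$, and let $D=g\,v_{0,n_0}$. If $D$ is submodular, then $\tau^{u,v}_D(b)=g-b$ for all $0\le b\le g$; consequently $k\ge g$ and $\mathrm{inv}_k(\tau^{u,v}_D)\ge\binom{g+1}{2}$.
   Context: A graph is a finite, connected, loopless multigraph (parallel edges allowed); its genus is $g=|E(G)|-|V(G)|+1$. A divisor is an element of the free abelian group on $V(G)$. Linear equivalence $\sim$ is generated by chip-firing (firing $w$ subtracts $\mathrm{val}(w)$ chips from $w$ and adds to each other vertex the number of edges joining it to $w$). The rank $r(D)$ is $-1$ if $D$ is not equivalent to an effective divisor, else the largest $r\ge0$ such that $D-E$ is equivalent to an effective divisor for every effective $E$ of degree $r$. $\delta(P)$ is $1$ if $P$ holds and $0$ otherwise. A twice-marked graph $(G,u,v)$ is a graph with two chosen vertices; its torsion order is the least $k\ge1$ with $ku\sim kv$. A twist of $D$ is $D+au+bv$. $\Delta(D)=r(D)-r(D-u)-r(D-v)+r(D-u-v)$. $D$ is submodular if $\Delta(D')\ge0$ for all twists $D'$. If $D$ is submodular, its transmission permutation $\tau^{u,v}_D$ is the unique bijection $\mathbb Z\to\mathbb Z$ with $\delta(\tau^{u,v}_D(b)=a)=\Delta(D+au-bv)$ for all $a,b$; it satisfies $\tau^{u,v}_D(n+k)=\tau^{u,v}_D(n)+k$ when $ku\sim kv$. An inversion of a bijection $\tau$ is a pair $(a,b)$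 with $a<b$, $\tau(a)>\tau(b)$; two inversions $(a,b),(a',b')$ are $k$-equivalent if $a-a'=b-b'\equiv0\pmod k$; $\mathrm{inv}_k(\tau)$ is the number of classes. For positive integers $n_0,\dots,n_g$, the banana graph $B_{n_0,\dots,n_g}$ is obtained by joining two vertices by $g+1$ internally disjoint paths of lengths $n_0,\dots,n_g$; it has genus $g$. Its vertices are labelled $v_{\alpha,i}$ ($0\le\alpha\le g$, $0\le i\le n_\alpha$), with $v_{\alpha,i}$ at distance $i$ from $v_{0,0}$ along the $\alpha$-th path; $v_{0,0}$ and $v_{0,n_0}$ are the two multivalent vertices. *)

From HB Require Import structures.
From mathcomp Require Import all_boot all_order all_algebra.
From Stdlib Require Import ClassicalEpsilon.
Set Implicit Arguments.
Unset Strict Implicit.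
Unset Printing Implicit Defensive.
Import Order.TTheory GRing.Theory Num.Theory.
Local Open Scope ring_scope.

(* Chip-firing on a loopless multigraph with vertex set V and edge     *)
(* multiplicity m : V -> V -> nat (m x y = number of edges x -- y).    *)
Section ChipFiring.
Variables (V : finType) (m : V -> V -> nat).

Definition divisor := V -> int.

Definition valence (w : V) : nat := (\sum_(x : V | x != w) m w x)%N.

Definition deg (D : divisor) : int := \sum_(x : V) D x.

Definition effective (D : divisor) : Prop := forall x, 0 <= D x.

(* This is the equivalence relation
   generated by chip-firing moves. *)
Definition linequiv (D D' : divisor) : Prop :=
  exists f : V -> int, forall x : V,
    D' x = D x - f x * (valence x)%:R + \sum_(y : V | y != x) f y * (m y x)%:R.

Definition equiv_effective (D : divisor) : Prop :=
  exists F : divisor, effective F /\ linequiv D F.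

Definition rank_prop (D : divisor) (r : nat) : Prop :=
  forall E : divisor, effective E -> deg E = r%:Z ->
    equiv_effective (fun x => D x - E x).

Definition is_rank (D : divisor) (r : int) : Prop :=
  (~ equiv_effective D /\ r = -1) \/
  (equiv_effective D /\ exists n : nat, r = n%:Z /\ rank_prop D n /\
      forall n' : nat, rank_prop D n' -> (n' <= n)%N).

Definition rank (D : divisor) : int := epsilon (inhabits 0) (is_rank D).

Definition pt (w : V) (a : int) : divisor := fun x => a * (x == w)%:R.

Definition twist (u v : V) (D : divisor) (a b : int) : divisor :=
  fun x => D x + a * (x == u)%:R + b * (x == v)%:R.

Definition Delta (u v : V) (D : divisor) : int :=
  rank D - rank (twist u v D (-1) 0) - rank (twist u v D 0 (-1))
    + rank (twist u v D (-1) (-1)).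

Definition submodular (u v : V) (D : divisor) : Prop :=
  forall a b : int, 0 <= Delta u v (twist u v D a b).

Definition is_transmission_perm (u v : V) (D : divisor) (tau : int -> int) : Prop :=
  bijective tau /\
  forall a b : int, Delta u v (twist u v D a (- b)) = (tau b == a)%:R.

Definition is_torsion_order (u v : V) (k : nat) : Prop :=
  (0 < k)%N /\ linequiv (pt u k%:Z) (pt v k%:Z) /\
  forall j : nat, (0 < j < k)%N -> ~ linequiv (pt u j%:Z) (pt v j%:Z).

End ChipFiring.

Definition inversion (tau : int -> int) (p : int * int) : Prop :=
  p.1 < p.2 /\ tau p.2 < tau p.1.

Definition kequiv (k : nat) (p q : int * int) : Prop :=
  p.1 - q.1 = p.2 - q.2 /\ (k%:Z %| p.1 - q.1)%Z.

(* inv_k(tau) >= N : there are at least N pairwise non-k-equivalent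
   inversions, i.e. at least N k-equivalence classes of inversions. *)
Definition inv_k_ge (tau : int -> int) (k N : nat) : Prop :=
  exists s : seq (int * int), size s = N /\
    (forall p, p \in s -> inversion tau p) /\
    (forall i j : nat, (i < j < size s)%N ->
        ~ kequiv k (nth (0, 0) s i) (nth (0, 0) s j)).

(* Vertices: inl false = v_{0,0}, inl true = v_{0,n_0} (the two         *)
(* multivalent vertices), inr (alpha, j) = internal vertex              *)
(* v_{alpha, j+1} of the alpha-th path (0 <= j < n_alpha - 1).          *)
Section Banana.
Variables (g : nat) (n : 'I_g.+1 -> nat).

Definition bvert : finType := (bool + {a : 'I_g.+1 & 'I_(n a).-1})%type.

(* the vertex v_{alpha,i}, 0 <= i <= n_alpha *)
Definition bv (a : 'I_g.+1) (i : nat) : bvert :=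
  if i == 0%N then inl false else
  match (insub i.-1 : option 'I_(n a).-1) with
  | Some j => inr (Tagged (fun a => 'I_(n a).-1) j)
  | None => inl true
  end.

(* number of edges between x and y: the alpha-th path has edges
   v_{alpha,i} -- v_{alpha,i+1} for 0 <= i < n_alpha *)
Definition bmult (x y : bvert) : nat :=
  (\sum_(a : 'I_g.+1) \sum_(i < n a)
     (((bv a i == x) && (bv a i.+1 == y)) || ((bv a i == y) && (bv a i.+1 == x))))%N.

Definition bu : bvert := bv ord0 0.
Definition bvv : bvert := bv ord0 (n ord0).

Definition bD : divisor bvert := pt bvv g%:Z.

End Banana.

Arguments bD [g] n _.
Arguments bu [g] n.
Arguments bmult [g] n x y.
Arguments bvv [g] n.

(* Write D(x, y) = x u + y v with u = v_{0,0}, v = v_{0,n_0}, so that the twists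
   of D = g v are the D(x, y), and Delta is a second difference of
   r(x, y) = rank D(x, y).  The argument has three ingredients.
   - Cuts: D(x, y) with x < 0 and y <= g (or symmetrically) is not equivalent to
     an effective divisor, since any vertex set separating u from v is left by
     g+1 edges, one per path (Dhar-type maximum argument for firing scripts).
   - Firing along one path with a tent-shaped script shows u + v ~ w + w' for
     every vertex w, hence r(c, c) >= c; the cut bound gives r(c, c+1) <= c and
     r(c+1, c) <= c for c < g.  So Delta(D + (g-b) u - b v) >= 1, i.e.
     tau(b) = g - b for 0 <= b <= g.
   - General facts: a transmission permutation is k-periodic when k u ~ k v, so
     reversing [0, g] forces g <= k; and when g <= k the inversions (i, j),
     0 <= i < j <= g, of a reversal of [0, g] are pairwise k-inequivalent. *)

From HB Require Import structures.
From mathcomp Require Import all_boot all_order all_algebra.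
From mathcomp Require Import zify ring lra.
From Stdlib Require Import ClassicalEpsilon Classical.
Import Order.TTheory GRing.Theory Num.Theory.
Local Open Scope ring_scope.
Set Implicit Arguments. Unset Strict Implicit.

Section LinearEquivalence.
Variables (V : finType) (m : V -> V -> nat).

Definition laplacian (f : V -> int) (x : V) : int :=
  \sum_(y : V | y != x) f y * (m y x)%:R - f x * (valence m x)%:R.

Lemma linequivE (D D' : divisor V) :
  linequiv m D D' <-> exists f, forall x, D' x = D x + laplacian f x.
Proof. by split=> [[f Hf]|[f Hf]]; exists f => x; rewrite Hf /laplacian; ring. Qed.

Lemma laplacianD f h x :
  laplacian (fun y => f y + h y) x = laplacian f x + laplacian h x.
Proof.
rewrite /laplacian (eq_bigr (fun y => f y * (m y x)%:R + h y * (m y x)%:R)).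
  by rewrite big_split /=; ring.
by move=> y _; rewrite mulrDl.
Qed.

Lemma laplacianN f x : laplacian (fun y => - f y) x = - laplacian f x.
Proof.
rewrite /laplacian (eq_bigr (fun y => - (f y * (m y x)%:R))).
  by rewrite sumrN; ring.
by move=> y _; rewrite mulNr.
Qed.

Lemma laplacian0 x : laplacian (fun _ => 0) x = 0.
Proof. by rewrite /laplacian big1 ?mul0r ?subr0 // => y _; rewrite mul0r. Qed.

Lemma sum_laplacian f : \sum_x laplacian f x = 0.
Proof.
rewrite /laplacian sumrB.
have -> : \sum_x \sum_(y | y != x) f y * (m y x)%:R =
          \sum_y f y * (valence m y)%:R.
  rewrite (exchange_big_dep xpredT) //=; apply: eq_bigr => y _.
  rewrite /valence natr_sum mulr_sumr.
  by apply: eq_big => [x|x _]; rewrite // eq_sym.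
by rewrite subrr.
Qed.

Lemma linequiv_eq (D D' : divisor V) : (forall x, D' x = D x) -> linequiv m D D'.
Proof.
move=> E; apply/linequivE; exists (fun _ => 0) => x.
by rewrite laplacian0 addr0 E.
Qed.

Lemma linequiv_refl (D : divisor V) : linequiv m D D.
Proof. exact: linequiv_eq. Qed.

Lemma linequiv_sym (D D' : divisor V) : linequiv m D D' -> linequiv m D' D.
Proof.
move/linequivE=> [f Hf]; apply/linequivE; exists (fun y => - f y) => x.
by rewrite laplacianN Hf; ring.
Qed.

Lemma linequiv_trans (D1 D2 D3 : divisor V) :
  linequiv m D1 D2 -> linequiv m D2 D3 -> linequiv m D1 D3.
Proof.
move/linequivE=> [f Hf] /linequivE [h Hh]; apply/linequivE.
by exists (fun y => f y + h y) => x; rewrite laplacianD Hh Hf; ring.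
Qed.

Lemma linequivD (D1 D1' D2 D2' : divisor V) :
  linequiv m D1 D1' -> linequiv m D2 D2' ->
  linequiv m (fun x => D1 x + D2 x) (fun x => D1' x + D2' x).
Proof.
move/linequivE=> [f Hf] /linequivE [h Hh]; apply/linequivE.
by exists (fun y => f y + h y) => x; rewrite laplacianD Hh Hf; ring.
Qed.

Lemma deg_linequiv (D D' : divisor V) : linequiv m D D' -> deg D' = deg D.
Proof.
move/linequivE=> [f Hf]; rewrite /deg (eq_bigr (fun x => D x + laplacian f x)) //.
by rewrite big_split /= sum_laplacian addr0.
Qed.

Lemma equiv_effective_linequiv (D D' : divisor V) :
  linequiv m D D' -> equiv_effective m D' -> equiv_effective m D.
Proof. by move=> HD [F [HF HD']]; exists F; split=> //; apply: linequiv_trans HD'. Qed.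

Lemma degD (D1 D2 : divisor V) : deg (fun x => D1 x + D2 x) = deg D1 + deg D2.
Proof. by rewrite /deg big_split. Qed.

Lemma degB (D1 D2 : divisor V) : deg (fun x => D1 x - D2 x) = deg D1 - deg D2.
Proof. by rewrite /deg sumrB. Qed.

Lemma deg_pt (w : V) a : deg (pt w a) = a.
Proof.
rewrite /deg /pt (bigD1 w) //= eqxx mulr1 big1 ?addr0 // => x /negbTE ->.
by rewrite mulr0.
Qed.

Lemma sum_pt (M : {set V}) w c : \sum_(z in M) pt w c z = if w \in M then c else 0.
Proof.
rewrite /pt; case: ifP => wM.
  rewrite (bigD1 w) //= eqxx mulr1 big1 ?addr0 // => z /andP [_ /negbTE ->].
  by rewrite mulr0.
apply: big1 => z zM; case: eqP => [E|_]; last by rewrite mulr0.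
by rewrite -E zM in wM.
Qed.

Lemma pt_ge0 (w : V) (a : int) x : 0 <= a -> 0 <= pt w a x.
Proof. by move=> ha; rewrite /pt mulr_ge0 // ler0n. Qed.

Lemma effective_deg (F : divisor V) : effective F -> 0 <= deg F.
Proof. by move=> HF; rewrite /deg sumr_ge0. Qed.

End LinearEquivalence.

(* Basic properties of the rank; the vertex w0 only witnesses that V is nonempty. *)
Section Rank.
Variables (V : finType) (m : V -> V -> nat) (w0 : V).

Lemma rank_prop_linequiv (D D' : divisor V) r :
  linequiv m D D' -> rank_prop m D r -> rank_prop m D' r.
Proof.
move=> HD H E HE HdE; apply: equiv_effective_linequiv (H E HE HdE).
exact: linequivD (linequiv_sym HD) (linequiv_refl m (fun x => - E x)).
Qed.

(* Rank conditions are downward closed: pad E with chips on w0. *)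
Lemma rank_prop_down (D : divisor V) r r' :
  rank_prop m D r -> (r' <= r)%N -> rank_prop m D r'.
Proof.
move=> H le E HE HdE; pose P := pt w0 (r - r')%N%:Z.
have HP x : 0 <= P x by apply: pt_ge0.
have Hdeg : deg (fun x => E x + P x) = r%:Z by rewrite degD HdE deg_pt; lia.
have [F [HF HL]] := H _ (fun x => addr_ge0 (HE x) (HP x)) Hdeg.
exists (fun x => F x + P x); split; first by move=> x; apply: addr_ge0.
apply: linequiv_trans (linequivD HL (linequiv_refl m P)).
by apply: linequiv_eq => x; ring.
Qed.

Lemma rank_prop_le_deg (D : divisor V) r : rank_prop m D r -> r%:Z <= deg D.
Proof.
move=> H; have [F [HF HL]] := H (pt w0 r%:Z) (fun x => pt_ge0 _ _ (le0z_nat _)) (deg_pt _ _).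
have := effective_deg HF; rewrite (deg_linequiv HL) degB deg_pt; lia.
Qed.

Lemma rank_prop0 (D : divisor V) : equiv_effective m D -> rank_prop m D 0.
Proof.
move=> H E HE HdE; apply: equiv_effective_linequiv H; apply: linequiv_eq => x.
have -> : E x = 0.
  move: HdE; rewrite /deg => /eqP; rewrite psumr_eq0; last by move=> y _; exact: HE.
  by move/allP/(_ x); rewrite mem_index_enum => /(_ isT) /eqP.
by rewrite subr0.
Qed.

Lemma max_nat_witness (P : nat -> Prop) B :
  P 0%N -> (forall r, P r -> (r <= B)%N) ->
  exists r, P r /\ forall r', P r' -> (r' <= r)%N.
Proof.
elim: B => [|B IH] H0 HB; first by exists 0%N; split=> // r' /HB.
case: (classic (P B.+1)) => HP; first by exists B.+1; split.
apply: IH => // r Hr; move: (HB r Hr); rewrite leq_eqVlt => /orP [/eqP E|//].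
by rewrite E in Hr.
Qed.

Lemma rank_spec (D : divisor V) : is_rank m D (rank m D).
Proof.
apply: (epsilon_spec (inhabits 0) (is_rank m D)).
case: (classic (equiv_effective m D)) => He; last by exists (-1); left.
have HB r : rank_prop m D r -> (r <= `|deg D|)%N by move/rank_prop_le_deg; lia.
have [r [Hr Hmax]] := max_nat_witness (rank_prop0 He) HB.
by exists r%:Z; right; split=> //; exists r.
Qed.

Lemma is_rank_uniq (D : divisor V) r1 r2 : is_rank m D r1 -> is_rank m D r2 -> r1 = r2.
Proof.
case=> [[H1 ->]|[H1 [n1 [-> [P1 M1]]]]] [[H2 ->]|[H2 [n2 [-> [P2 M2]]]]] //.
by congr Posz; apply/eqP; rewrite eqn_leq M1 ?M2.
Qed.

Lemma rank_ge (D : divisor V) r :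
  equiv_effective m D -> rank_prop m D r -> r%:Z <= rank m D.
Proof.
move=> He Hr; case: (rank_spec D) => [[H _]|[_ [r0 [-> [_ M]]]]] //.
by rewrite lez_nat; apply: M.
Qed.

Lemma rank_le_witness (D E : divisor V) (r : nat) :
  effective E -> deg E = r.+1%:Z -> ~ equiv_effective m (fun x => D x - E x) ->
  rank m D <= r%:Z.
Proof.
move=> HE HdE HDE; case: (rank_spec D) => [[_ ->]|[_ [r0 [-> [P _]]]]] //.
rewrite lez_nat leqNgt; apply/negP => lt.
exact: HDE (rank_prop_down P lt HE HdE).
Qed.

Lemma rank_neg (D : divisor V) : ~ equiv_effective m D -> rank m D = -1.
Proof. by move=> He; case: (rank_spec D) => [[_ ->]|[H _]]. Qed.

Lemma rank_linequiv (D D' : divisor V) : linequiv m D D' -> rank m D = rank m D'.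
Proof.
move=> HL; apply: (@is_rank_uniq D'); last exact: rank_spec.
have HL' := linequiv_sym HL.
case: (rank_spec D) => [[H ->]|[H [r [-> [P M]]]]].
  by left; split=> // H'; apply: H; apply: equiv_effective_linequiv H'.
right; split; first exact: equiv_effective_linequiv HL' H.
exists r; split=> //; split; first exact: rank_prop_linequiv P.
by move=> r' /(rank_prop_linequiv HL'); apply: M.
Qed.

End Rank.

(* Delta only depends on the linear equivalence class of D, hence a torsion
   relation k u ~ k v makes every transmission permutation k-periodic. *)
Section Transmission.
Variables (V : finType) (m : V -> V -> nat) (u v : V).

Lemma twist_linequiv (D D' : divisor V) a b :
  linequiv m D D' -> linequiv m (twist u v D a b) (twist u v D' a b).
Proof.
move=> HD; rewrite /twist.
exact: (linequivD (linequivD HD (linequiv_refl m (fun x => a * (x == u)%:R)))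
                  (linequiv_refl m (fun x => b * (x == v)%:R))).
Qed.

Lemma Delta_linequiv (D D' : divisor V) :
  linequiv m D D' -> Delta m u v D = Delta m u v D'.
Proof.
by move=> HD; rewrite /Delta !(rank_linequiv u (twist_linequiv _ _ HD))
  (rank_linequiv u HD).
Qed.

Lemma twist_torsion (D : divisor V) (k : nat) a b :
  linequiv m (pt u k%:Z) (pt v k%:Z) ->
  linequiv m (twist u v D a b) (twist u v D (a + k%:Z) (b - k%:Z)).
Proof.
move=> Hk.
have H := linequivD (linequiv_refl m (twist u v D a (b - k%:Z))) (linequiv_sym Hk).
apply: linequiv_trans (linequiv_trans _ H) _; apply: linequiv_eq => x;
  by rewrite /twist /pt; ring.
Qed.

Lemma transmission_periodic (D : divisor V) tau (k : nat) :
  is_transmission_perm m u v D tau -> linequiv m (pt u k%:Z) (pt v k%:Z) ->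
  forall b, tau (b + k%:Z) = tau b + k%:Z.
Proof.
move=> [_ Htau] Hk b.
have : Delta m u v (twist u v D (tau b + k%:Z) (- (b + k%:Z))) = 1.
  by rewrite opprD -(Delta_linequiv (twist_torsion D (tau b) (- b) Hk)) Htau eqxx.
by rewrite Htau; case: eqP.
Qed.

End Transmission.

Section CutCriterion.
Variables (V : finType) (m : V -> V -> nat).
Hypothesis m_sym : forall x y, m x y = m y x.

Definition cut (M : {set V}) : nat := (\sum_(x in M) \sum_(y in ~: M) m x y)%N.

Lemma cut_int (M : {set V}) :
  (cut M)%:R = \sum_(x in M) \sum_(y in ~: M) (m x y)%:R :> int.
Proof. by rewrite /cut natr_sum; apply: eq_bigr => x _; rewrite natr_sum. Qed.

Lemma laplacianE f x : laplacian m f x = \sum_y (f y - f x) * (m x y)%:R.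
Proof.
rewrite [RHS](bigD1 x) //= subrr mul0r add0r /laplacian /valence natr_sum.
by rewrite mulr_sumr -sumrB; apply: eq_bigr => y _; rewrite mulrBl m_sym.
Qed.

(* If D u < 0 and every nonempty M avoiding u carries fewer chips than edges
   leave it, then D is not equivalent to an effective F: the set M where a
   firing script f from D to F is maximal avoids u (else F u <= D u), and each
   vertex of M loses at least one chip per edge leaving M. *)
Lemma not_equiv_effective_cut (D : divisor V) (u : V) : D u < 0 ->
  (forall M : {set V}, u \notin M -> M != set0 -> \sum_(x in M) D x < (cut M)%:R) ->
  ~ equiv_effective m D.
Proof.
move=> Du HM [F [HF /linequivE [f Hf]]].
have [x0 _ fmax] := @arg_maxP _ _ _ u xpredT f isT.
pose M := [set x | f x == f x0].
have uM : u \notin M.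
  rewrite inE; apply/negP => /eqP fu.
  have : F u <= D u.
    rewrite Hf laplacianE gerDl; apply: sumr_le0 => y _.
    by apply: mulr_le0_ge0 => //; rewrite subr_le0 fu; exact: fmax.
  by have := HF u; lia.
have M0 : M != set0 by apply/set0Pn; exists x0; rewrite inE.
have F_ge0 : 0 <= \sum_(x in M) F x by apply: sumr_ge0 => x _; exact: HF.
have F_le : \sum_(x in M) F x <= \sum_(x in M) D x - (cut M)%:R.
  rewrite cut_int -sumrB; apply: ler_sum => x xM; rewrite Hf laplacianE lerD2l.
  apply: (@le_trans _ _ (\sum_y (if y \in ~: M then - (m x y)%:R else 0))); last first.
    by rewrite -big_mkcond sumrN.
  apply: ler_sum => y _; move: xM; rewrite !inE => /eqP fx.
  case: ifP => [yM|/negbT]; last by rewrite negbK => /eqP ->; rewrite fx subrr mul0r.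
  rewrite -mulN1r; apply: ler_wpM2r => //.
  by have := fmax y isT; move: yM => /eqP; lia.
by have := HM M uM M0; move: F_ge0 F_le; lra.
Qed.

End CutCriterion.

Lemma inv_k_ge_reversal (tau : int -> int) (N k : nat) : (N <= k)%N ->
  (forall b : int, 0 <= b <= N%:Z -> tau b = N%:Z - b) -> inv_k_ge tau k 'C(N.+1, 2).
Proof.
move=> hNk rev.
pose s := [seq (i%:Z, j%:Z) | j <- iota 0 N.+1, i <- iota 0 j].
have memS p : p \in s -> exists i j : nat, [/\ p = (i%:Z, j%:Z), (i < j)%N & (j <= N)%N].
  move=> /allpairsPdep [j [i [hj hi ->]]]; exists i, j.
  by split=> //; move: hj hi; rewrite !mem_iota; lia.
have uniq_s : uniq s.
  apply: allpairs_uniq_dep; first exact: iota_uniq.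
    by move=> j _; exact: iota_uniq.
  by move=> [j1 i1] [j2 i2] _ _ /= [-> ->].
exists s; split.
  rewrite size_allpairs_dep (eq_map (size_iota 0)) map_id sumnE -bin2_sum.
  by rewrite /index_iota subn0.
split.
  move=> p /memS [i [j [-> hij hj]]]; split; first by rewrite /= ltz_nat.
  by rewrite /= !rev; lia.
move=> i j /andP [hij hjs] [E1 E2].
have his : (i < size s)%N by apply: ltn_trans hjs.
have := nth_uniq (0, 0) his hjs uniq_s; rewrite (ltn_eqF hij).
have /memS [a [b [Ea hab hb]]] := mem_nth (0, 0) his.
have /memS [c [d [Ec hcd hd]]] := mem_nth (0, 0) hjs.
rewrite Ea Ec in E1 E2 *; move: E1 E2 => /= E1 /dvdzP [q Eq].
(* a - c = b - d is a multiple of k although |a - c| < k or |b - d| < k. *)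
have q0 : q = 0 by nia.
rewrite q0 mul0r in Eq.
have -> : a = c by lia.
have -> : b = d by lia.
by rewrite eqxx.
Qed.

Section BananaVertices.
Variables (g : nat) (n : 'I_g.+1 -> nat).
Hypothesis n_pos : forall a, (0 < n a)%N.
Local Notation V := (bvert n).

Lemma bv0 a : bv n a 0 = inl false :> V.
Proof. by []. Qed.

Lemma bvN a : bv n a (n a) = inl true :> V.
Proof. by rewrite /bv; case: eqP (n_pos a) => [->//|_ _]; rewrite insubN // ltnn. Qed.

Lemma bvS a (j : 'I_(n a).-1) :
  bv n a j.+1 = inr (Tagged (fun a => 'I_(n a).-1) j) :> V.
Proof. by rewrite /bv /= valK. Qed.

Lemma bu_def : bu n = inl false. Proof. by []. Qed.
Lemma bvv_def : bvv n = inl true. Proof. exact: bvN. Qed.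

Definition path_pos a (z : V) : nat :=
  match z with inl b => if b then n a else 0 | inr s => (val (tagged s)).+1 end.

Lemma path_posK a q : (q <= n a)%N -> path_pos a (bv n a q) = q.
Proof.
case: q => [//|q] le; case: (ltnP q (n a).-1) => lt; first by rewrite (bvS (Ordinal lt)).
have -> : q.+1 = n a by have := n_pos a; lia.
by rewrite bvN.
Qed.

Lemma bv_eq a p q : (p <= n a)%N -> (q <= n a)%N -> (bv n a p == bv n a q) = (p == q).
Proof.
move=> hp hq; apply/eqP/eqP => [E|->//].
by rewrite -(path_posK hp) -(path_posK hq) E.
Qed.

Lemma bv_neq_succ a i : (i < n a)%N -> bv n a i != bv n a i.+1.
Proof. by move=> lt; rewrite bv_eq ?(ltnW lt) // neq_ltn ltnSn. Qed.

Lemma bv_cover a (z : V) :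
  (exists2 q, (q <= n a)%N & z = bv n a q) \/ (forall i, bv n a i != z).
Proof.
case: z => [[]|s]; first (by left; exists (n a); rewrite ?bvN); first by left; exists 0%N.
case: (eqVneq (tag s) a) => [E|ne].
  left; case: s E => b j /= E; subst b; exists j.+1; last by rewrite bvS.
  by have := ltn_ord j; have := n_pos a; lia.
right=> i; rewrite /bv; case: ifP => _ //; case: insubP => [j _ _|_] //=.
by apply/negP => /eqP [] E; rewrite -E /= eqxx in ne.
Qed.

Lemma bv_onto (z : V) : exists a, exists2 q, (q <= n a)%N & z = bv n a q.
Proof.
case: z => [b|[a j]].
  by exists ord0; case: b; [exists (n ord0); rewrite ?bvN | exists 0%N].
exists a; case: (bv_cover a (inr (Tagged (fun a => 'I_(n a).-1) j))) => // /(_ j.+1).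
by rewrite bvS eqxx.
Qed.

Lemma bmult_sym (x y : V) : bmult n x y = bmult n y x.
Proof. by apply: eq_bigr => a _; apply: eq_bigr => i _; rewrite orbC. Qed.

End BananaVertices.

(* Edge cuts of the banana graph: every path joining M to its complement
   contributes an edge, so a set separating the two multivalent vertices is
   left by at least g+1 edges. *)
Section BananaCuts.
Variables (g : nat) (n : 'I_g.+1 -> nat).
Hypothesis n_pos : forall a, (0 < n a)%N.
Local Notation V := (bvert n).

Lemma leq_sum_term (I : finType) (P : pred I) (F : I -> nat) i :
  P i -> (F i <= \sum_(j | P j) F j)%N.
Proof. by move=> Pi; rewrite (bigD1 i) //= leq_addr. Qed.

Definition path_edge a (i : nat) (x y : V) : bool :=
  ((bv n a i == x) && (bv n a i.+1 == y)) || ((bv n a i == y) && (bv n a i.+1 == x)).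

Definition path_cut a (M : {set V}) : nat :=
  (\sum_(x in M) \sum_(y in ~: M) \sum_(i < n a) path_edge a i x y)%N.

Lemma cut_paths (M : {set V}) : cut (bmult n) M = (\sum_a path_cut a M)%N.
Proof.
rewrite /cut /bmult /path_cut /path_edge.
under eq_bigr => x _ do rewrite exchange_big.
by rewrite exchange_big.
Qed.

Lemma path_cut_gt0 a (M : {set V}) p q : (p <= n a)%N -> (q <= n a)%N ->
  bv n a p \notin M -> bv n a q \in M -> (0 < path_cut a M)%N.
Proof.
move=> hp hq pM qM.
have [/existsP [i Hi]|] := boolP [exists i : 'I_(n a), (bv n a i \in M) != (bv n a i.+1 \in M)].
  have edge_i x y : path_edge a i x y -> x \in M -> y \in ~: M -> (0 < path_cut a M)%N.
    move=> e xM yM; apply: leq_trans (leq_sum_term _ xM); apply: leq_trans (leq_sum_term _ yM).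
    by apply: leq_trans (leq_sum_term _ (isT : xpredT i)); rewrite lt0b.
  case: (boolP (bv n a i \in M)) => iM.
    have i1M : bv n a i.+1 \in ~: M by rewrite inE; move: Hi; rewrite iM; case: (_ \in M).
    by apply: (edge_i _ _ _ iM i1M); rewrite /path_edge !eqxx.
  have i1M : bv n a i.+1 \in M by move: Hi; rewrite (negbTE iM); case: (_ \in M).
  have iM' : bv n a i \in ~: M by rewrite inE.
  by apply: (edge_i _ _ _ i1M iM'); rewrite /path_edge !eqxx orbT.
rewrite negb_exists => /forallP constM.
have Mq j : (j <= n a)%N -> (bv n a j \in M) = (bv n a 0 \in M).
  elim: j => [//|j IH] hj; rewrite -IH ?(ltnW hj) //.
  by have := constM (Ordinal hj); rewrite negbK eq_sym => /eqP.
by move: qM; rewrite Mq // -(Mq p hp) (negbTE pM).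
Qed.

Definition path_end a (b : bool) : nat := if b then n a else 0%N.

Lemma bv_path_end a b : bv n a (path_end a b) = inl b.
Proof. by case: b; rewrite /path_end ?bvN. Qed.

Lemma path_end_le a b : (path_end a b <= n a)%N.
Proof. by case: b. Qed.

Lemma not_equiv_effective_ends (e : bool) (c d : int) : c < 0 -> d <= g%:Z ->
  ~ equiv_effective (bmult n) (fun z => pt (inl e) c z + pt (inl (~~ e)) d z).
Proof.
move=> c_neg d_le; apply: (not_equiv_effective_cut (@bmult_sym _ n) (u := inl e)).
  by rewrite /pt eqxx; case: e; rewrite /= mulr1 mulr0 addr0.
move=> M eM /set0Pn [z zM]; rewrite big_split /= !sum_pt (negbTE eM) add0r cut_paths.
have cross a q : (q <= n a)%N -> bv n a q \in M -> (0 < path_cut a M)%N.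
  by move=> hq qM; apply: (path_cut_gt0 (path_end_le a e) hq _ qM); rewrite bv_path_end.
case: ifP => e'M.
  have : (g.+1 <= \sum_(a : 'I_g.+1) path_cut a M)%N.
    apply: (@leq_trans (\sum_(a : 'I_g.+1) 1)%N); first by rewrite sum_nat_const card_ord muln1.
    apply: leq_sum => a _.
    by apply: (cross a _ (path_end_le a (~~ e))); rewrite bv_path_end.
  by move=> H; apply: le_lt_trans d_le _; rewrite natz ltz_nat.
have [a [q hq Ez]] := bv_onto n_pos z.
have := leq_sum_term (fun a => path_cut a M) (isT : xpredT a).
by have := cross a q hq; rewrite -Ez => /(_ zM); rewrite natz; lia.
Qed.

End BananaCuts.

(* Firing along one path: with the tent function t(x) = min(x, N-x, p, N-p) on
   the a-th path as (negated) script, u + v is equivalent to v_{a,p} + v_{a,N-p}. *)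
Definition tent (N p x : nat) : int := (minn (minn x (N - x)) (minn p (N - p)))%:Z.

Lemma tentE N p x : (x <= N)%N -> tent N p x =
  (if (x <= minn p (N - p))%N then x
   else if (N - minn p (N - p) <= x)%N then N - x else minn p (N - p))%N%:Z.
Proof. by move=> hx; rewrite /tent; case: ifP => h1; [|case: ifP => h2]; lia. Qed.

(* The chips gained by the q-th vertex of a path of length N (with one chip
   on each end) when the negated tent is fired: the ends lose their chips and
   the vertices at positions p and N - p gain one each. *)
Lemma tent_laplacian N p q : (0 < p < N)%N -> (q <= N)%N ->
  (q == 0%N)%:R + (q == N)%:R
    + ((if (q < N)%N then tent N p q - tent N p q.+1 else 0)
       + (if (0 < q <= N)%N then tent N p q.-1.+1 - tent N p q.-1 else 0))
  = (q == p)%:R + (q == (N - p)%N)%:R :> int.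
Proof.
move=> hp hq.
have hs1 : (1 <= minn p (N - p))%N by lia.
have hs2 : (2 * minn p (N - p) <= N)%N by lia.
have hs3 : (minn p (N - p) == p) || (minn p (N - p) == N - p)%N by lia.
rewrite hq andbT.
case: (posnP q) => h0; case: (ltngtP q N) => h2 //; rewrite /= ?addr0 ?add0r.
all: rewrite ?tentE; try lia.
all: move: hs1 hs2 hs3; move: (minn p (N - p)) => s hs1 hs2 hs3.
all: case: (q =P p) => h3; case: (q =P (N - p)%N) => h4; rewrite /=.
all: by repeat (case: ifP => ?); lia.
Qed.

Lemma sum_ord_indicator N (F : nat -> int) q :
  \sum_(i < N) (i == q :> nat)%:R * F i = if (q < N)%N then F q else 0.
Proof.
case: ltnP => h.
  rewrite (bigD1 (Ordinal h)) //= eqxx mul1r big1 ?addr0 // => i ne.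
  case: eqP => [E|]; last by rewrite mul0r.
  by move: ne; rewrite (_ : i = Ordinal h) ?eqxx //; apply: val_inj.
apply: big1 => i _; case: eqP => [E|]; last by rewrite mul0r.
by have := ltn_ord i; rewrite E ltnNge h.
Qed.

Lemma sum_ord_indicatorS N (F : nat -> int) q :
  \sum_(i < N) (i.+1 == q :> nat)%:R * F i = if (0 < q <= N)%N then F q.-1 else 0.
Proof.
case: q => [|q] /=; first by apply: big1 => i _; rewrite mul0r.
by rewrite (eq_bigr (fun i : 'I_N => (i == q :> nat)%:R * F i)) ?sum_ord_indicator.
Qed.

Definition uv_div g (n : 'I_g.+1 -> nat) (x y : int) : divisor (bvert n) :=
  fun z => pt (bu n) x z + pt (bvv n) y z.
Arguments uv_div [g] n x y.

Section BananaFiring.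
Variables (g : nat) (n : 'I_g.+1 -> nat).
Hypothesis n_pos : forall a, (0 < n a)%N.
Local Notation V := (bvert n).

Lemma sum_vertex_indicator (F : V -> int) w : \sum_y F y * (w == y)%:R = F w.
Proof.
rewrite (bigD1 w) //= eqxx mulr1 big1 ?addr0 // => y /negbTE.
by rewrite eq_sym => ->; rewrite mulr0.
Qed.

Lemma path_edge_laplacian (h : V -> int) z b (i : nat) : (i < n b)%N ->
  \sum_y (h y - h z) * (path_edge b i z y)%:R =
  (bv n b i == z)%:R * (h (bv n b i.+1) - h (bv n b i))
  + (bv n b i.+1 == z)%:R * (h (bv n b i) - h (bv n b i.+1)).
Proof.
move=> lt; have ne := bv_neq_succ n_pos lt.
rewrite /path_edge; case: (eqVneq (bv n b i) z) => [<-|ne1].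
  rewrite (eq_sym (bv n b i.+1)) (negbTE ne).
  rewrite (eq_bigr (fun y => (h y - h (bv n b i)) * (bv n b i.+1 == y)%:R)).
    by rewrite sum_vertex_indicator /= mul0r addr0 mul1r.
  by move=> y _; rewrite andbF orbF.
case: (eqVneq (bv n b i.+1) z) => [<-|ne2].
  rewrite (eq_bigr (fun y => (h y - h (bv n b i.+1)) * (bv n b i == y)%:R)).
    by rewrite sum_vertex_indicator /= mul0r add0r mul1r.
  by move=> y _; rewrite andbT.
rewrite /= mul0r add0r mul0r; apply: big1 => y _.
by rewrite andbF mulr0.
Qed.

Lemma laplacian_paths (h : V -> int) z : laplacian (bmult n) h z =
  \sum_b \sum_(i < n b) ((bv n b i == z)%:R * (h (bv n b i.+1) - h (bv n b i))
  + (bv n b i.+1 == z)%:R * (h (bv n b i) - h (bv n b i.+1))).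
Proof.
rewrite (laplacianE (@bmult_sym _ n)) /bmult.
under eq_bigr => y _ do rewrite natr_sum mulr_sumr.
rewrite exchange_big; apply: eq_bigr => b _.
under eq_bigr => y _ do rewrite natr_sum mulr_sumr.
rewrite exchange_big; apply: eq_bigr => i _.
exact: (path_edge_laplacian h z (ltn_ord i)).
Qed.

Variables (a : 'I_g.+1) (p : nat).
Hypothesis hp : (0 < p < n a)%N.

Definition tent_script (z : V) : int :=
  match z with
  | inl _ => 0
  | inr s => if tag s == a then - tent (n a) p (val (tagged s)).+1 else 0
  end.

Lemma tent_script_bv b q : (q <= n b)%N ->
  tent_script (bv n b q) = if b == a then - tent (n a) p q else 0.
Proof.
case: q => [|q] hq; first by rewrite bv0; case: (b == a); rewrite // /tent !min0n oppr0.
case: (ltnP q (n b).-1) => lt; first by rewrite (bvS (Ordinal lt)).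
have Eq : q.+1 = n b by have := n_pos b; lia.
rewrite Eq bvN //; case: eqP => // ->.
by rewrite /tent subnn minn0 min0n oppr0.
Qed.

Lemma laplacian_tent_script z : laplacian (bmult n) tent_script z = \sum_(i < n a)
  ((bv n a i == z)%:R * (tent (n a) p i - tent (n a) p i.+1)
   + (bv n a i.+1 == z)%:R * (tent (n a) p i.+1 - tent (n a) p i)).
Proof.
rewrite laplacian_paths (bigD1 a) //= [X in _ + X]big1 ?addr0; last first.
  move=> b nb; apply: big1 => i _.
  by rewrite !tent_script_bv ?(negbTE nb) ?(ltnW (ltn_ord i)) // subrr !mulr0 addr0.
apply: eq_bigr => i _; rewrite !tent_script_bv ?eqxx ?(ltnW (ltn_ord i)) //.
by congr (_ + _); congr (_ * _); rewrite opprK addrC.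
Qed.

Lemma tent_firing (z : V) : uv_div n 1 1 z + laplacian (bmult n) tent_script z
  = pt (bv n a p) 1 z + pt (bv n a (n a - p)) 1 z.
Proof.
rewrite laplacian_tent_script /uv_div /pt bu_def (bvv_def n_pos) !mul1r.
case: (bv_cover n_pos a z) => [[q hq ->]|off].
  rewrite -(bv0 n a) -(bvN n_pos a) !(bv_eq n_pos) ?leqnn ?leq_subr //; last first.
    by case/andP: hp => _ /ltnW.
  under eq_bigr => i _ do
    rewrite (bv_eq n_pos (ltnW (ltn_ord i)) hq) (bv_eq n_pos (ltn_ord i) hq).
  rewrite big_split /= (sum_ord_indicator _ (fun i => tent (n a) p i - tent (n a) p i.+1)).
  rewrite (sum_ord_indicatorS _ (fun i => tent (n a) p i.+1 - tent (n a) p i)).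
  exact: tent_laplacian.
rewrite big1; last by move=> i _; rewrite !(negbTE (off _)) !mul0r addr0.
move: (off 0%N) (off (n a)); rewrite bv0 bvN // !(eq_sym _ z) => /negbTE -> /negbTE ->.
by rewrite !(eq_sym z) !(negbTE (off _)).
Qed.

End BananaFiring.

Lemma uv_minus_vertex g (n : 'I_g.+1 -> nat) (n_pos : forall a, (0 < n a)%N)
    (w : bvert n) :
  equiv_effective (bmult n) (fun z => uv_div n 1 1 z - pt w 1 z).
Proof.
case: w => [[]|[a j]].
- exists (pt (inl false) 1); split; first by move=> x; apply: pt_ge0.
  by apply: linequiv_eq => z; rewrite /uv_div bu_def (bvv_def n_pos); ring.
- exists (pt (inl true) 1); split; first by move=> x; apply: pt_ge0.
  by apply: linequiv_eq => z; rewrite /uv_div bu_def (bvv_def n_pos); ring.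
have hp : (0 < j.+1 < n a)%N by have := ltn_ord j; have := n_pos a; lia.
exists (pt (bv n a (n a - j.+1)) 1); split; first by move=> x; apply: pt_ge0.
apply/linequivE; exists (tent_script a j.+1) => z.
have := tent_firing n_pos hp z; rewrite (bvS j) => E.
by rewrite addrAC E addrC addKr.
Qed.

Section BananaRanks.
Variables (g : nat) (n : 'I_g.+1 -> nat).
Hypothesis n_pos : forall a, (0 < n a)%N.
Local Notation V := (bvert n).
Local Notation rk x y := (rank (bmult n) (uv_div n x y)).

Lemma not_equiv_effective_uv x y :
  ((x < 0) && (y <= g%:Z)) || ((y < 0) && (x <= g%:Z)) ->
  ~ equiv_effective (bmult n) (uv_div n x y).
Proof.
case/orP=> /andP [neg le] Heff.
  apply: (not_equiv_effective_ends n_pos (e := false) neg le).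
  apply: equiv_effective_linequiv Heff; apply: linequiv_eq => z.
  by rewrite /uv_div bu_def (bvv_def n_pos).
apply: (not_equiv_effective_ends n_pos (e := true) neg le).
apply: equiv_effective_linequiv Heff; apply: linequiv_eq => z.
by rewrite /uv_div bu_def (bvv_def n_pos) addrC.
Qed.

(* c (u + v) - E is equivalent to an effective divisor for every effective E
   of degree c: remove the chips of E one at a time with uv_minus_vertex. *)
Lemma rank_prop_uv_diag (c : nat) : rank_prop (bmult n) (uv_div n c%:Z c%:Z) c.
Proof.
elim: c => [|c IH] E HE HdE.
  apply: rank_prop0 HE HdE; exists (uv_div n 0 0); split; last exact: linequiv_refl.
  by move=> z; rewrite /uv_div /pt !mul0r addr0.
have [w Ew|E0] := pickP (fun w => 0 < E w); last first.
  have : deg E = 0 by rewrite /deg big1 // => z _; have := E0 z; have := HE z; rewrite /=; lia.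
  by rewrite HdE.
pose E' := fun z => E z - pt w 1 z.
have HE' : effective E'.
  move=> z; rewrite /E' /pt; case: (eqVneq z w) => [->|_]; last by rewrite mulr0 subr0.
  by rewrite mulr1 subr_ge0.
have HdE' : deg E' = c%:Z by rewrite degB deg_pt HdE; lia.
have [F1 [HF1 L1]] := IH _ HE' HdE'.
have [F2 [HF2 L2]] := uv_minus_vertex n_pos w.
exists (fun z => F1 z + F2 z); split; first by move=> z; apply: addr_ge0.
apply: linequiv_trans (linequivD L1 L2).
by apply: linequiv_eq => z; rewrite /E' /uv_div /pt intS; ring.
Qed.

Lemma rank_uv_diag (c : nat) : c%:Z <= rk c%:Z c%:Z.
Proof.
apply: (rank_ge (bu n)); last exact: rank_prop_uv_diag.
exists (uv_div n c c); split; last exact: linequiv_refl.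
by move=> z; rewrite /uv_div addr_ge0 // pt_ge0.
Qed.

(* Removing c+1 chips from u (resp. v) leaves a coefficient -1. *)
Lemma rank_uv_offdiag (c : nat) : (c < g)%N ->
  rk c%:Z c.+1%:Z <= c%:Z /\ rk c.+1%:Z c%:Z <= c%:Z.
Proof.
move=> hc; have hc' : c.+1%:Z <= g%:Z by rewrite lez_nat.
split.
  apply: (rank_le_witness (bu n) (E := pt (bu n) c.+1%:Z)) => [z||]; rewrite ?deg_pt //.
    exact: pt_ge0.
  move=> Heff; apply: (@not_equiv_effective_uv (-1) c.+1%:Z); first by rewrite hc'.
  apply: equiv_effective_linequiv Heff; apply: linequiv_eq => z.
  by rewrite /uv_div /pt intS; ring.
apply: (rank_le_witness (bu n) (E := pt (bvv n) c.+1%:Z)) => [z||]; rewrite ?deg_pt //.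
  exact: pt_ge0.
move=> Heff; apply: (@not_equiv_effective_uv c.+1%:Z (-1)); first by rewrite hc' orbT.
apply: equiv_effective_linequiv Heff; apply: linequiv_eq => z.
by rewrite /uv_div /pt intS; ring.
Qed.

Lemma Delta_twist_bD a b :
  Delta (bmult n) (bu n) (bvv n) (twist (bu n) (bvv n) (bD n) a b) =
  rk a (g%:Z + b) - rk (a - 1) (g%:Z + b) - rk a (g%:Z + b - 1) + rk (a - 1) (g%:Z + b - 1).
Proof.
rewrite /Delta; congr (_ - _ - _ + _); apply: (rank_linequiv (bu n));
by apply: linequiv_eq => z; rewrite /twist /uv_div /bD /pt; ring.
Qed.

Lemma Delta_uv_diag (c : nat) : (c <= g)%N ->
  1 <= rk c%:Z c%:Z - rk (c%:Z - 1) c%:Z - rk c%:Z (c%:Z - 1) + rk (c%:Z - 1) (c%:Z - 1).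
Proof.
have rk_neg x y : ((x < 0) && (y <= g%:Z)) || ((y < 0) && (x <= g%:Z)) -> rk x y = -1.
  by move=> H; apply: (rank_neg (bu n)); apply: not_equiv_effective_uv.
case: c => [|c] hc.
  have := rank_uv_diag 0.
  by rewrite (rk_neg (0 - 1) 0) ?(rk_neg 0 (0 - 1)) ?(rk_neg (0 - 1) (0 - 1)) //; lia.
have -> : c.+1%:Z - 1 = c%:Z by lia.
have [off1 off2] := rank_uv_offdiag hc.
by have := rank_uv_diag c.+1; have := rank_uv_diag c; lia.
Qed.

Lemma banana_transmission_reversal tau :
  is_transmission_perm (bmult n) (bu n) (bvv n) (bD n) tau ->
  forall b : int, 0 <= b <= g%:Z -> tau b = g%:Z - b.
Proof.
move=> [_ Htau] b /andP [b_ge0 b_le].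
have [c Ec] : exists c : nat, g%:Z - b = c%:Z by exists `|g%:Z - b|%N; lia.
have c_le : (c <= g)%N by lia.
have := Htau (g%:Z - b) b; rewrite Delta_twist_bD Ec.
have := Delta_uv_diag c_le.
by case: eqP => // _ H1 H2; rewrite H2 in H1.
Qed.

End BananaRanks.

Lemma reversal_period_ge (tau : int -> int) (N k : nat) : (0 < k)%N ->
  (forall b, tau (b + k%:Z) = tau b + k%:Z) ->
  (forall b : int, 0 <= b <= N%:Z -> tau b = N%:Z - b) -> (N <= k)%N.
Proof.
move=> k_pos periodic rev; rewrite leqNgt; apply/negP => lt_kN.
have := periodic 0; rewrite add0r !rev; [lia | apply/andP; split; lia ..].
Qed.

Theorem mainTheorem19 (g : nat) (n : 'I_g.+1 -> nat) (k : nat) :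
  (2 <= g)%N ->
  (forall a : 'I_g.+1, (0 < n a)%N) ->
  is_torsion_order (bmult n) (bu n) (bvv n) k ->
  submodular (bmult n) (bu n) (bvv n) (bD n) ->
  forall tau : int -> int,
    is_transmission_perm (bmult n) (bu n) (bvv n) (bD n) tau ->
    (forall b : int, 0 <= b <= g%:Z -> tau b = g%:Z - b) /\
    (g <= k)%N /\
    inv_k_ge tau k 'C(g.+1, 2).
Proof.
move=> _ n_pos [k_pos [k_torsion _]] _ tau Htau.
have rev := banana_transmission_reversal n_pos Htau.
have g_le_k := reversal_period_ge k_pos (transmission_periodic Htau k_torsion) rev.
by split=> //; split=> //; apply: inv_k_ge_reversal.
Qed.
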